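(* Let $C$ be a coalgebra over a field and $A=C^*$. Let $I_1\subseteq I_2\subseteq\cdots$ be an ascending chain of ideals of $A$, each closed in the finite topology. Then $\bigcup_n I_n$ is closed in the finite topology if and only if the chain terminates, i.e. $I_n=I_{n+1}=\cdots$ for some $n$.
   Context: $C^*$ is the dual algebra of the coalgebra $C$ with convolution product. For a subspace $X\subseteq C$ let $X^\perp=\{f\in C^*\mid f(X)=0\}$, and for $Y\subseteq C^*$ let $Y^\perp=\{c\in C\mid f(c)=0\ \forall f\in Y\}$. A subspace $W\subseteq C^*$ is closed in the finite topology iff $W=W^{\perp\perp}$, equivalently $W=X^\perp$ for some subspace $X\subseteq C$. *)

From mathcomp Require Import all_boot all_order all_algebra.
Set Implicit Arguments. Unset Strict Implicit. Unset Printing Implicit Defensive.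
Import GRing.Theory.
Local Open Scope ring_scope.

(* Since MathComp has no tensor product of
   (possibly infinite-dimensional) vector spaces, an element of C (x) C is
   represented by a finite list of pairs [(a_i, b_i)] standing for
   sum_i a_i (x) b_i.  Over a field, tensors (in C(x)C, C(x)C(x)C) are
   determined by their values on pure tensors of linear functionals
   f (x) g (resp. f (x) g (x) h), so the coalgebra axioms are stated
   through such evaluations; this is exactly the usual notion. *)

Section Coalg.
Variables (K : fieldType) (C : lmodType K).

Definition lin_functional (f : C -> K) : Prop :=
  forall (a : K) (x y : C), f (a *: x + y) = a * f x + f y.

Definition tens_eval (f g : C -> K) (s : seq (C * C)) : K :=
  \sum_(p <- s) f p.1 * g p.2.

Definition is_coalgebra (delta : C -> seq (C * C)) (eps : C -> K) : Prop :=
  [/\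
      lin_functional eps,
      (forall f g, lin_functional f -> lin_functional g ->
         lin_functional (fun c => tens_eval f g (delta c))),
      (* coassociativity: (id (x) Delta) Delta = (Delta (x) id) Delta *)
      (forall f g h c, lin_functional f -> lin_functional g -> lin_functional h ->
         \sum_(p <- delta c) f p.1 * tens_eval g h (delta p.2)
         = \sum_(p <- delta c) tens_eval f g (delta p.1) * h p.2),
      (forall c, \sum_(p <- delta c) eps p.1 *: p.2 = c)
    & (forall c, \sum_(p <- delta c) eps p.2 *: p.1 = c)].

Definition conv (delta : C -> seq (C * C)) (f g : C -> K) : C -> K :=
  fun c => tens_eval f g (delta c).

Definition is_ideal (delta : C -> seq (C * C)) (I : (C -> K) -> Prop) : Prop :=
  [/\ (forall f, I f -> lin_functional f),
      I (fun _ => 0),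
      (forall f g, I f -> I g -> I (fun c => f c + g c)),
      (forall (a : K) f, I f -> I (fun c => a * f c))
    & (forall f g, lin_functional g -> I f ->
         I (conv delta g f) /\ I (conv delta f g))].

Definition perpC (X : C -> Prop) : (C -> K) -> Prop :=
  fun f => lin_functional f /\ forall c, X c -> f c = 0.
Definition perpA (Y : (C -> K) -> Prop) : C -> Prop :=
  fun c => forall f, Y f -> f c = 0.

(* closed in the finite topology: W = W^perp^perp *)
Definition closed_finite (W : (C -> K) -> Prop) : Prop :=
  forall f, W f <-> perpC (perpA W) f.

End Coalg.

(* Put X_n = I_n^perp: a decreasing chain of subspaces of C whose intersection
   X_inf is (U_n I_n)^perp.  If the I_n do not stabilise then, by closedness, no
   X_n equals X_inf, so one can pick y_k in X_(n_k) \ X_(n_(k+1)) that are linearly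
   independent modulo X_inf.  A linear functional vanishing on X_inf with f(y_k) = 1
   (extended to all of C by Zorn's lemma) then lies in X_inf^perp but in no I_n. *)

From mathcomp Require Import all_boot all_order all_algebra.
From mathcomp Require Import boolp classical_sets.
From Stdlib Require Import ClassicalEpsilon.
From mathcomp Require Import ring.
Set Implicit Arguments. Unset Strict Implicit. Unset Printing Implicit Defensive.
Import GRing.Theory.
Local Open Scope classical_set_scope.
Local Open Scope ring_scope.

Section LinearFunctionals.
Variables (K : fieldType) (C : lmodType K).

Definition subspace (S : set C) : Prop :=
  S 0 /\ forall (a : K) x y, S x -> S y -> S (a *: x + y).

Definition linear_on (S : set C) (h : C -> K) : Prop :=
  forall (a : K) x y, S x -> S y -> h (a *: x + y) = a * h x + h y.

Lemma subspaceD S x y : subspace S -> S x -> S y -> S (x + y).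
Proof. by move=> [_ SZD] Sx Sy; have := SZD 1 x y Sx Sy; rewrite scale1r. Qed.

Lemma subspaceZ S a x : subspace S -> S x -> S (a *: x).
Proof. by move=> [S0 SZD] Sx; have := SZD a x 0 Sx S0; rewrite addr0. Qed.

Lemma subspaceB S x y : subspace S -> S x -> S y -> S (x - y).
Proof.
by move=> SS Sx Sy; apply: subspaceD => //; rewrite -scaleN1r; apply: subspaceZ.
Qed.

Lemma linear_on0 S h : subspace S -> linear_on S h -> h 0 = 0.
Proof.
move=> [S0 _] hlin; have := hlin 1 0 0 S0 S0.
by rewrite scale1r addr0 mul1r => /eqP; rewrite -subr_eq subrr eq_sym => /eqP.
Qed.

Lemma perpA_subspace (Y : set (C -> K)) :
  (forall f, Y f -> lin_functional f) -> subspace (perpA Y).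
Proof.
move=> Ylin; have Y0 f : Y f -> f 0 = 0.
  by move=> Yf; apply: (@linear_on0 setT) => // a x y _ _; apply: Ylin.
split=> [f /Y0 //|a x y Yx Yy f Yf].
by rewrite Ylin // Yx // Yy // mulr0 addr0.
Qed.

Record pfun := PFun { pdom : set C; pval : C -> K }.

Definition is_pfun (p : pfun) : Prop := subspace (pdom p) /\ linear_on (pdom p) (pval p).

Definition pfun_le (p q : pfun) : Prop :=
  forall c, pdom p c -> pdom q c /\ pval p c = pval q c.

Lemma pfun_le_refl p : pfun_le p p.
Proof. by []. Qed.

Lemma pfun_le_trans p q r : pfun_le p q -> pfun_le q r -> pfun_le p r.
Proof. by move=> pq qr c /pq [/qr [? <-] ->]. Qed.

Lemma pfun_directed_ub (J : Type) (j0 : J) (F : J -> pfun) :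
  (forall j, is_pfun (F j)) ->
  (forall i j, exists k, pfun_le (F i) (F k) /\ pfun_le (F j) (F k)) ->
  exists q, is_pfun q /\ forall j, pfun_le (F j) q.
Proof.
move=> Fpfun Fdir.
have Fagree i j c : pdom (F i) c -> pdom (F j) c -> pval (F i) c = pval (F j) c.
  have [k [/(_ c) ik /(_ c) jk]] := Fdir i j.
  by move=> /ik [_ ->] /jk [_ ->].
pose idx c := epsilon (inhabits j0) (fun j => pdom (F j) c).
have idxE j c : pdom (F j) c -> pval (F (idx c)) c = pval (F j) c.
  move=> Fjc; apply: (Fagree _ _ _ _ Fjc).
  by apply: (epsilon_spec (inhabits j0) (fun j => pdom (F j) c)); exists j.
exists (PFun (fun c => exists j, pdom (F j) c) (fun c => pval (F (idx c)) c)).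
split; last by move=> j c Fjc; split; [exists j | rewrite /= (idxE j)].
split; [split|].
- by exists j0; case: (Fpfun j0) => -[].
- move=> a x y [i Fix] [j Fjy].
  have [k [/(_ x Fix) [Fkx _] /(_ y Fjy) [Fky _]]] := Fdir i j.
  by exists k; case: (Fpfun k) => -[_ FkZD] _; apply: FkZD.
- move=> a x y [i Fix] [j Fjy] /=.
  have [k [/(_ x Fix) [Fkx _] /(_ y Fjy) [Fky _]]] := Fdir i j.
  have [[_ FkZD] Fklin] := Fpfun k.
  by rewrite !(idxE k) //; [apply: Fklin | apply: FkZD].
Qed.

Lemma pfun_adjoin p c (v : K) : is_pfun p -> ~ pdom p c ->
  exists q, [/\ is_pfun q, pfun_le p q, pdom q c, pval q c = v
              & forall z, pdom q z -> exists a, pdom p (z - a *: c)].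
Proof.
move=> [pS plin] pc.
have coord_uniq z a b : pdom p (z - a *: c) -> pdom p (z - b *: c) -> a = b.
  move=> pa pb; apply: contrapT => /eqP; rewrite -subr_eq0 => ab_neq0; apply: pc.
  have -> : c = (a - b)^-1 *: ((z - b *: c) - (z - a *: c)).
    by rewrite [X in _ *: X]addrC opprB addrA subrK -scalerBl scalerA mulVf ?scale1r.
  by apply: subspaceZ => //; apply: subspaceB.
pose coord z := epsilon (inhabits 0) (fun a => pdom p (z - a *: c)).
have coordE z a : pdom p (z - a *: c) -> coord z = a.
  move=> pza; apply: (coord_uniq z _ _ _ pza).
  by apply: (epsilon_spec (inhabits 0) (fun a => pdom p (z - a *: c))); exists a.
have split_lin a x y ax ay :
    a *: x + y - (a * ax + ay) *: c = a *: (x - ax *: c) + (y - ay *: c).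
  by rewrite scalerBr scalerA addrACA -opprD scalerDl.
exists (PFun (fun z => exists a, pdom p (z - a *: c))
             (fun z => pval p (z - coord z *: c) + coord z * v)).
split.
- split; [split|].
  + by exists 0; rewrite scale0r subr0; exact: pS.1.
  + move=> a x y [ax px] [ay py]; exists (a * ax + ay).
    by rewrite split_lin; apply: pS.2.
  + move=> a x y [ax px] [ay py] /=.
    have pxy : pdom p (a *: x + y - (a * ax + ay) *: c).
      by rewrite split_lin; apply: pS.2.
    rewrite (coordE _ _ pxy) (coordE _ _ px) (coordE _ _ py) split_lin plin //.
    ring.
- move=> z pz; have pz0 : pdom p (z - 0 *: c) by rewrite scale0r subr0.
  split; first by exists 0.
  by rewrite /= (coordE _ _ pz0) scale0r subr0 mul0r addr0.
- by exists 1; rewrite scale1r subrr; exact: pS.1.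
- have pc1 : pdom p (c - 1 *: c) by rewrite scale1r subrr; exact: pS.1.
  by rewrite /= (coordE _ _ pc1) scale1r subrr (linear_on0 pS plin) add0r mul1r.
- by [].
Qed.

Lemma pfun_extend p :
  is_pfun p -> exists f, lin_functional f /\ forall c, pdom p c -> f c = pval p c.
Proof.
move=> ppfun.
pose T := {q | is_pfun q /\ pfun_le p q}.
pose R (s t : T) := `[< pfun_le (sval s) (sval t) >].
pose t0 : T := exist _ p (conj ppfun (@pfun_le_refl p)).
have [t tmax] : exists t, premaximal R t.
  apply: (ZL_preorder t0).
  - by move=> s; apply/asboolP; exact: pfun_le_refl.
  - by move=> r s u /asboolP rs /asboolP su; apply/asboolP; exact: pfun_le_trans rs su.
  move=> A Atot; have [[s0 As0]|A0] := pselect (exists s, A s); last first.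
    by exists t0 => s As; case: A0; exists s.
  have [q [qpfun ubq]] :
      exists q, is_pfun q /\ forall s : {s | A s}, pfun_le (sval (sval s)) q.
    apply: (pfun_directed_ub (exist _ s0 As0)) => [[[q [? _]] _] // | [i Ai] [j Aj]].
    have [/asboolP ij | /asboolP ji] := Atot i j Ai Aj.
      by exists (exist _ j Aj); split=> //; exact: pfun_le_refl.
    by exists (exist _ i Ai); split=> //; exact: pfun_le_refl.
  have pq : pfun_le p q := pfun_le_trans (proj2 (svalP s0)) (ubq (exist _ s0 As0)).
  by exists (exist _ q (conj qpfun pq)) => s As; apply/asboolP; exact: (ubq (exist _ s As)).
have [tpfun pt] := svalP t.
have tfull c : pdom (sval t) c.
  apply: contrapT => tc.
  have [q [qpfun tq qc _ _]] := pfun_adjoin 0 tpfun tc.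
  have /asboolP qt := tmax (exist _ q (conj qpfun (pfun_le_trans pt tq))) (asboolT tq).
  by have [] := qt c qc.
exists (pval (sval t)); split; last by move=> c /pt [_ ->].
by move=> a x y; case: tpfun => _; apply.
Qed.

Section DecreasingChain.
Variable X : nat -> set C.
Hypothesis X_subspace : forall n, subspace (X n).
Hypothesis X_decr : forall n, X n.+1 `<=` X n.
Let Xinf : set C := fun c => forall n, X n c.
Hypothesis X_not_stable : forall n, exists y, X n y /\ ~ Xinf y.

Lemma decreasing_chain_le m n : (m <= n)%N -> X n `<=` X m.
Proof.
apply: (@homo_leq _ X (fun A B => B `<=` A)) => [A|B A D BA DB|k].
- exact: subset_refl.
- exact: subset_trans DB BA.
- exact: X_decr.
Qed.

Lemma Xinf_subspace : subspace Xinf.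
Proof.
split=> [n|a x y Xx Xy n]; first exact: (X_subspace n).1.
exact: (X_subspace n).2.
Qed.

(* The invariant of the construction: it keeps each new y_k out of the domain
   built so far. *)
Definition separated (p : pfun) n : Prop := forall c, pdom p c -> X n c -> Xinf c.

Definition chain_step_rel (s t : pfun * nat) : Prop :=
  [/\ is_pfun t.1, pfun_le s.1 t.1, (s.2 < t.2)%N, separated t.1 t.2
    & exists y, [/\ X s.2 y, pdom t.1 y & pval t.1 y = 1]].

Lemma chain_step s : is_pfun s.1 -> separated s.1 s.2 -> exists t, chain_step_rel s t.
Proof.
case: s => p n /= ppfun psep.
have [y [Xny yinf]] := X_not_stable n.
have py : ~ pdom p y by move=> /psep /(_ Xny).
have [m Xmy] : exists m, ~ X m y by apply/existsNP.
pose m' := maxn m n.+1.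
have Xm'y : ~ X m' y by move=> /(decreasing_chain_le (leq_maxl m n.+1)).
have [q [qpfun pq qy qy1 qspan]] := pfun_adjoin 1 ppfun py.
exists (q, m'); split=> //=; first by rewrite leq_max ltnSn orbT.
- move=> z qz Xz; have [a pza] := qspan z qz.
  have Xnz : X n z by apply: (decreasing_chain_le _ Xz); rewrite leq_max leqnSn orbT.
  have Xza : Xinf (z - a *: y).
    by apply: psep => //; apply: subspaceB => //; apply: subspaceZ.
  have a0 : a = 0.
    apply: contrapT => /eqP a_neq0; apply: Xm'y.
    have -> : y = a^-1 *: (z - (z - a *: y)).
      by rewrite opprB addrC subrK scalerA mulVf ?scale1r.
    by apply: subspaceZ => //; apply: subspaceB.
  by move: Xza; rewrite a0 scale0r subr0.
- by exists y.
Qed.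

Lemma chain_separating_functional :
  exists f, [/\ lin_functional f, forall c, Xinf c -> f c = 0
              & forall n, exists y, X n y /\ f y = 1].
Proof.
pose next s := epsilon (inhabits s) (chain_step_rel s).
pose s k := iter k next (PFun Xinf (fun _ => 0), 0%N).
have next_step t : is_pfun t.1 -> separated t.1 t.2 -> chain_step_rel t (next t).
  by move=> tpfun tsep; apply: epsilon_spec; exact: chain_step.
have s_inv k : is_pfun (s k).1 /\ separated (s k).1 (s k).2.
  elim: k => [|k [kpfun ksep]]; last by have [] := next_step _ kpfun ksep.
  split=> [|c //]; split=> [|a x y _ _]; first exact: Xinf_subspace.
  by rewrite mulr0 addr0.
have s_step k : chain_step_rel (s k) (s k.+1) by case: (s_inv k); exact: next_step.
have s_le k l : (k <= l)%N -> pfun_le (s k).1 (s l).1.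
  apply: (@homo_leq _ (fun k => (s k).1) pfun_le) => [p|q p r|i].
  - exact: pfun_le_refl.
  - exact: pfun_le_trans.
  - by case: (s_step i).
have s_idx k : (k <= (s k).2)%N.
  by elim: k => // k IH; case: (s_step k) => _ _ lt _ _; exact: leq_ltn_trans IH lt.
have [q [qpfun ubq]] : exists q, is_pfun q /\ forall k, pfun_le (s k).1 q.
  apply: (pfun_directed_ub 0%N) => [k|i j]; first exact: (s_inv k).1.
  by exists (maxn i j); split; apply: s_le; rewrite ?leq_maxl ?leq_maxr.
have [f [flin fq]] := pfun_extend qpfun.
exists f; split=> // [c Xc|n].
  by have [qc sq] := ubq 0%N c Xc; rewrite fq // -sq.
case: (s_step n) => _ _ _ _ [y [Xy sy sy1]].
exists y; split; first exact: decreasing_chain_le (s_idx n) _ Xy.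
by have [qy sq] := ubq n.+1 y sy; rewrite fq // -sq.
Qed.

End DecreasingChain.

Section AscendingChain.
Variable I : nat -> set (C -> K).
Hypothesis I_lin : forall n f, I n f -> lin_functional f.
Hypothesis I_closed : forall n, closed_finite (I n).
Hypothesis I_incr : forall n, I n `<=` I n.+1.
Let U : set (C -> K) := fun f => exists n, I n f.

Lemma increasing_chain_le m n : (m <= n)%N -> I m `<=` I n.
Proof.
apply: (@homo_leq _ I subset) => [A|B A D|k].
- exact: subset_refl.
- exact: subset_trans.
- exact: I_incr.
Qed.

Lemma closed_union_of_stationary :
  (exists n, forall m, (n <= m)%N -> forall f, I m f <-> I n f) -> closed_finite U.
Proof.
move=> [n In_stat]; suff -> : U = I n by [].
apply/funext => f; apply/propext; split=> [[m Imf]|Inf]; last by exists n.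
have [nm|mn] := leqP n m; first exact/(In_stat m nm).
exact: increasing_chain_le (ltnW mn) _ Imf.
Qed.

Lemma stationary_of_closed_union :
  closed_finite U -> exists n, forall m, (n <= m)%N -> forall f, I m f <-> I n f.
Proof.
move=> Uclosed; apply: contrapT => not_stat.
pose X n := perpA (I n).
have X_decr n : X n.+1 `<=` X n by move=> c Xc g Ing; apply: Xc; exact: I_incr.
have X_not_stable n : exists y, X n y /\ ~ (forall m, X m y).
  apply: contrapT => Xn_stable; apply: not_stat; exists n => m nm f.
  split=> [Imf|]; last exact: increasing_chain_le.
  apply/(I_closed n f); split=> [|c Xnc]; first exact: I_lin Imf.
  have Xc : forall k, X k c by apply: contrapT => nXc; apply: Xn_stable; exists c.
  exact: Xc m f Imf.
have [f [flin f0 fX]] :=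
  chain_separating_functional (fun n => perpA_subspace (@I_lin n)) X_decr X_not_stable.
have [n Inf] : U f.
  by apply/Uclosed; split=> // c Uc; apply: f0 => k g Ikg; apply: Uc; exists k.
have [y [Xny fy1]] := fX n.
by move: fy1; rewrite (Xny f Inf) => /eqP; rewrite eq_sym oner_eq0.
Qed.

End AscendingChain.

End LinearFunctionals.

Local Close Scope ring_scope.

Theorem lemma3p2 (K : fieldType) (C : lmodType K)
    (delta : C -> seq (C * C)) (eps : C -> K)
    (HC : is_coalgebra delta eps)
    (I : nat -> ((C -> K) -> Prop))
    (Hideal : forall n, is_ideal delta (I n))
    (Hclosed : forall n, closed_finite (I n))
    (Hchain : forall n f, I n f -> I n.+1 f) :
  closed_finite (fun f => exists n, I n f) <->
  exists n, forall m, n <= m -> forall f, I m f <-> I n f.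
Proof.
have I_lin n f : I n f -> lin_functional f by case: (Hideal n) => + _ _ _ _; apply.
split; first exact: (stationary_of_closed_union I_lin).
exact: closed_union_of_stationary.
Qed.
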